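(* Let $\alpha\in(1,2)$ and let $p\ge3$ be an odd integer. Then $$f^{p,0}(\theta)\le f^{p,\alpha}(\theta)\le f^{p,2}(\theta)\qquad\text{for all }\theta\text{ with }|\theta|\in[1,\pi].$$
   Context: For real $\beta\ge0$ and integer $p\ge 2$, $f^{p,\beta}(\theta)=\sum_{l\in\mathbb Z}|\theta+2l\pi|^{\beta}\left(\frac{\sin(\theta/2+l\pi)}{\theta/2+l\pi}\right)^{p+1}$ (with $\frac{\sin x}{x}:=1$ at $x=0$ and $|x|^0:=1$); in particular $f^{p,0}$ and $f^{p,2}$ are given by this formula with $\beta=0$ and $\beta=2$. *)

From Stdlib Require Import Reals Lra.
From Coquelicot Require Import Coquelicot.
Open Scope R_scope.

Definition sinc (x : R) : R := if Req_EM_T x 0 then 1 else sin x / x.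

(* |x|^beta with the convention |x|^0 = 1 (also at x = 0), and 0^beta = 0 for beta > 0 *)
Definition abspow (x beta : R) : R :=
  if Req_EM_T beta 0 then 1
  else if Req_EM_T x 0 then 0 else Rpower (Rabs x) beta.

Definition fterm (p : nat) (beta theta : R) (l : Z) : R :=
  abspow (theta + 2 * IZR l * PI) beta * (sinc (theta / 2 + IZR l * PI)) ^ (p + 1).

(* bilateral sum over l in Z: pair l = n with l = -n-1 *)
Definition fpb (p : nat) (beta theta : R) : R :=
  Series (fun n : nat => fterm p beta theta (Z.of_nat n)
                         + fterm p beta theta (- Z.of_nat n - 1)%Z).

From Stdlib Require Import Reals Lra Lia Psatz.
From Coquelicot Require Import Coquelicot.
Open Scope R_scope.

(* Write x_l = theta + 2 l pi for the sampling nodes, so that the l-th summand of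
   f^{p,beta}(theta) is |x_l|^beta * sinc(x_l/2)^(p+1).

   - For odd p the exponent p+1 is even, so every summand is nonnegative.
   - If 1 <= |theta| <= pi then |x_l| >= 1 for every l, and on [1, oo) the map
     beta |-> |x|^beta is nondecreasing; hence the summands, and the paired
     summands fpair whose series is fpb, are nondecreasing in beta.
   - For p >= 3 the series with beta = 2 converges: |sinc y| <= min(1, 1/|y|)
     and p+1 >= 4 give a summand at most 16 / x_l^2, and |x_l| >= (2|l|-1) pi
     grows linearly in |l|, so the paired series is dominated by the telescoping
     series 1/((n+1)(n+2)).
   Comparison with the beta = 2 series gives convergence for every beta <= 2, and
   comparison of nonnegative series (Series_le) then yields that fpb is
   nondecreasing in beta on (-oo, 2] (fpb_exponent_mono); the theorem is the
   instance 0 <= alpha <= 2. *)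

Lemma PI_gt_3 : 3 < PI.
Proof. pose proof PI2_3_2; lra. Qed.

Lemma abspow_nonneg (x b : R) : 0 <= abspow x b.
Proof.
  unfold abspow. destruct (Req_EM_T b 0); [lra|]. destruct (Req_EM_T x 0); [lra|].
  left; apply exp_pos.
Qed.

Lemma abspow_Rpower (x b : R) : x <> 0 -> abspow x b = Rpower (Rabs x) b.
Proof.
  intro Hx. unfold abspow.
  destruct (Req_EM_T b 0) as [->|_]; [now rewrite Rpower_O by (apply Rabs_pos_lt; auto)|].
  now destruct (Req_EM_T x 0).
Qed.

Lemma abspow_exponent_mono (x a b : R) : 1 <= Rabs x -> a <= b -> abspow x a <= abspow x b.
Proof.
  intros Hx Hab. assert (x <> 0) by (intro; subst; rewrite Rabs_R0 in Hx; lra).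
  rewrite !abspow_Rpower by auto. now apply Rle_Rpower.
Qed.

Lemma abspow_2 (x : R) : abspow x 2 = x ^ 2.
Proof.
  unfold abspow. destruct (Req_EM_T 2 0); [lra|].
  destruct (Req_EM_T x 0) as [->|Hx]; [simpl; ring|].
  replace 2 with (INR 2) by (simpl; lra). rewrite Rpower_pow by (apply Rabs_pos_lt; auto).
  apply pow2_abs.
Qed.

(* Even powers are nonnegative; this is where the oddness of p enters. *)
Lemma sinc_even_pow_nonneg (y : R) (m : nat) : 0 <= sinc y ^ (2 * m).
Proof. rewrite pow_mult. apply pow_le, pow2_ge_0. Qed.

Lemma sq_pos (y : R) : y <> 0 -> 0 < y ^ 2.
Proof. intro Hy. replace (y ^ 2) with (Rsqr y) by (unfold Rsqr; ring). now apply Rsqr_pos_lt. Qed.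

Lemma sinc_sq_le_inv (y : R) : y <> 0 -> sinc y ^ 2 <= / y ^ 2.
Proof.
  intro Hy. unfold sinc. destruct (Req_EM_T y 0) as [|_]; [contradiction|].
  replace ((sin y / y) ^ 2) with (sin y ^ 2 * / y ^ 2) by (field; auto).
  rewrite <- (Rmult_1_l (/ y ^ 2)) at 2. apply Rmult_le_compat_r.
  - left; apply Rinv_0_lt_compat, sq_pos; auto.
  - pose proof (SIN_bound y). nra.
Qed.

Lemma sinc_even_pow_decay (y : R) (m : nat) : 1 <= Rabs y -> (2 <= m)%nat ->
  sinc y ^ (2 * m) <= / y ^ 4.
Proof.
  intros Hy Hm. assert (Hy0 : y <> 0) by (intro; subst; rewrite Rabs_R0 in Hy; lra).
  assert (Hy2 : 1 <= y ^ 2) by (rewrite <- pow2_abs; nra).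
  set (t := sinc y ^ 2).
  assert (Ht : 0 <= t <= / y ^ 2) by (split; [apply pow2_ge_0 | now apply sinc_sq_le_inv]).
  assert (Hinv : / y ^ 2 <= 1) by (rewrite <- Rinv_1; apply Rinv_le_contravar; lra).
  assert (Hrest : 0 <= t ^ (m - 2) <= 1).
  { split; [apply pow_le; lra|]. rewrite <- (pow1 (m - 2)). apply pow_incr. lra. }
  replace (sinc y ^ (2 * m)) with (t ^ 2 * t ^ (m - 2))
    by (unfold t; rewrite <- pow_add, <- pow_mult; f_equal; lia).
  replace (/ y ^ 4) with ((/ y ^ 2) ^ 2) by (field; auto).
  assert (t ^ 2 <= (/ y ^ 2) ^ 2) by (apply pow_incr; lra).
  assert (0 <= t ^ 2) by apply pow2_ge_0.
  nra.
Qed.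

Definition node (theta : R) (l : Z) : R := theta + 2 * IZR l * PI.

Lemma fterm_node (p : nat) (b theta : R) (l : Z) :
  fterm p b theta l = abspow (node theta l) b * sinc (node theta l / 2) ^ (p + 1).
Proof. unfold fterm, node. do 3 f_equal. field. Qed.

(* Reverse triangle inequality: |x_l| >= 2|l| pi - |theta|. *)
Lemma node_lower_bound (theta : R) (l : Z) : Rabs theta <= PI ->
  (2 * IZR (Z.abs l) - 1) * PI <= Rabs (node theta l).
Proof.
  intro Hth. pose proof PI_gt_3.
  assert (Hl : Rabs (2 * IZR l * PI) = 2 * IZR (Z.abs l) * PI).
  { rewrite abs_IZR, !Rabs_mult, (Rabs_right 2), (Rabs_right PI); lra. }
  pose proof (Rabs_triang_inv (2 * IZR l * PI) (- theta)) as Htri.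
  rewrite Rabs_Ropp, Hl in Htri. unfold node.
  replace (theta + 2 * IZR l * PI) with (2 * IZR l * PI - - theta) by ring. lra.
Qed.

Lemma node_ge_1 (theta : R) (l : Z) : 1 <= Rabs theta <= PI -> 1 <= Rabs (node theta l).
Proof.
  intro Hth. destruct (Z.eq_dec l 0) as [->|Hl].
  - unfold node. replace (theta + 2 * 0 * PI) with theta by ring. lra.
  - assert (1 <= IZR (Z.abs l)) by (apply IZR_le; lia).
    pose proof (node_lower_bound theta l (proj2 Hth)). pose proof PI_gt_3. nra.
Qed.

Lemma node_ge_index (theta : R) (l : Z) (n : nat) : Rabs theta <= PI ->
  (Z.of_nat n + 1 <= Z.abs l)%Z -> INR n + 2 <= Rabs (node theta l).
Proof.
  intros Hth Hl. pose proof (node_lower_bound theta l Hth). pose proof PI_gt_3.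
  assert (INR n + 1 <= IZR (Z.abs l)).
  { rewrite INR_IZR_INZ, <- plus_IZR. now apply IZR_le. }
  pose proof (pos_INR n). nra.
Qed.

Lemma fterm_nonneg (p : nat) (b theta : R) (l : Z) : Nat.Odd p -> 0 <= fterm p b theta l.
Proof.
  intros [k ->]. rewrite fterm_node. replace (2 * k + 1 + 1)%nat with (2 * (k + 1))%nat by lia.
  apply Rmult_le_pos; [apply abspow_nonneg | apply sinc_even_pow_nonneg].
Qed.

Lemma fterm_exponent_mono (p : nat) (a b theta : R) (l : Z) :
  Nat.Odd p -> 1 <= Rabs theta <= PI -> a <= b -> fterm p a theta l <= fterm p b theta l.
Proof.
  intros [k ->] Hth Hab. rewrite !fterm_node.
  replace (2 * k + 1 + 1)%nat with (2 * (k + 1))%nat by lia.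
  apply Rmult_le_compat_r; [apply sinc_even_pow_nonneg|].
  apply abspow_exponent_mono; [apply node_ge_1|]; auto.
Qed.

Lemma fterm_2_decay (p : nat) (theta : R) (l : Z) : Nat.Odd p -> (3 <= p)%nat ->
  2 <= Rabs (node theta l) -> fterm p 2 theta l <= 16 / node theta l ^ 2.
Proof.
  intros [k ->] Hp Hx. rewrite fterm_node, abspow_2.
  set (x := node theta l) in *.
  assert (Hx0 : x <> 0) by (intro E; rewrite E, Rabs_R0 in Hx; lra).
  replace (2 * k + 1 + 1)%nat with (2 * (k + 1))%nat by lia.
  assert (Hy : 1 <= Rabs (x / 2)) by (unfold Rdiv; rewrite Rabs_mult, Rabs_inv, (Rabs_right 2); lra).
  pose proof (sinc_even_pow_decay (x / 2) (k + 1) Hy ltac:(lia)) as Hdec.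
  replace (16 / x ^ 2) with (x ^ 2 * / (x / 2) ^ 4) by (field; auto).
  apply Rmult_le_compat_l; [apply pow2_ge_0 | exact Hdec].
Qed.

Definition fpair (p : nat) (b theta : R) (n : nat) : R :=
  fterm p b theta (Z.of_nat n) + fterm p b theta (- Z.of_nat n - 1).

Lemma fpair_nonneg (p : nat) (b theta : R) (n : nat) : Nat.Odd p -> 0 <= fpair p b theta n.
Proof. intro Hp. unfold fpair. apply Rplus_le_le_0_compat; now apply fterm_nonneg. Qed.

Lemma fpair_exponent_mono (p : nat) (a b theta : R) (n : nat) :
  Nat.Odd p -> 1 <= Rabs theta <= PI -> a <= b -> fpair p a theta n <= fpair p b theta n.
Proof. intros. unfold fpair. apply Rplus_le_compat; now apply fterm_exponent_mono. Qed.

Definition telescoping (n : nat) : R := / (INR n + 1) - / (INR n + 2).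

Lemma sum_telescoping (N : nat) : sum_n telescoping N = 1 - / (INR N + 2).
Proof.
  induction N as [|N IH].
  - rewrite sum_O. unfold telescoping. simpl. rewrite Rplus_0_l, Rinv_1. reflexivity.
  - rewrite sum_Sn, IH. change (1 - / (INR N + 2) + telescoping (S N) = 1 - / (INR (S N) + 2)).
    unfold telescoping. rewrite !S_INR. pose proof (pos_INR N). field. lra.
Qed.

Lemma ex_series_telescoping : ex_series telescoping.
Proof.
  exists 1. change (is_lim_seq (sum_n telescoping) 1).
  apply is_lim_seq_ext with (fun N => 1 - / (INR N + 2)); [intro; now rewrite sum_telescoping|].
  replace (Finite 1) with (Rbar_minus 1 0) by (simpl; f_equal; ring).
  apply is_lim_seq_minus'; [apply is_lim_seq_const|].
  replace (Finite 0) with (Rbar_inv p_infty) by reflexivity.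
  apply is_lim_seq_inv; [|discriminate].
  apply is_lim_seq_plus with p_infty 2; [apply is_lim_seq_INR | apply is_lim_seq_const | reflexivity].
Qed.

Lemma fpair_2_tail (p : nat) (theta : R) (n : nat) : Nat.Odd p -> (3 <= p)%nat ->
  Rabs theta <= PI -> fpair p 2 theta (S n) <= telescoping n * 32.
Proof.
  intros Hp Hp3 Hth. pose proof (pos_INR n).
  assert (Hterm : forall l, (Z.of_nat n + 1 <= Z.abs l)%Z ->
            fterm p 2 theta l <= 16 / (INR n + 2) ^ 2).
  { intros l Hl. pose proof (node_ge_index theta l n Hth Hl) as Hx.
    eapply Rle_trans; [apply fterm_2_decay; auto; lra|].
    unfold Rdiv. apply Rmult_le_compat_l; [lra|].
    rewrite <- pow2_abs. apply Rinv_le_contravar; [nra|]. apply pow_incr; lra. }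
  unfold fpair. eapply Rle_trans.
  { apply Rplus_le_compat; apply Hterm; lia. }
  unfold telescoping. replace (/ (INR n + 1) - / (INR n + 2)) with (/ ((INR n + 1) * (INR n + 2)))
    by (field; lra).
  apply Rmult_le_reg_r with ((INR n + 1) * (INR n + 2) ^ 2); [nra|].
  field_simplify; lra.
Qed.

Lemma ex_series_fpair (p : nat) (b theta : R) : Nat.Odd p -> (3 <= p)%nat ->
  1 <= Rabs theta <= PI -> b <= 2 -> ex_series (fpair p b theta).
Proof.
  intros Hp Hp3 Hth Hb.
  assert (H2 : ex_series (fpair p 2 theta)).
  { apply ex_series_incr_1.
    apply (@ex_series_le R_AbsRing R_CompleteNormedModule _ (fun n => telescoping n * 32));
      [|apply ex_series_scal_r, ex_series_telescoping].
    intro n. change (Rabs (fpair p 2 theta (S n)) <= telescoping n * 32).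
    rewrite Rabs_right by (apply Rle_ge, fpair_nonneg; auto).
    apply fpair_2_tail; [exact Hp | exact Hp3 | lra]. }
  apply (@ex_series_le R_AbsRing R_CompleteNormedModule _ (fpair p 2 theta)); [intro n|exact H2].
  change (Rabs (fpair p b theta n) <= fpair p 2 theta n).
  rewrite Rabs_right by (apply Rle_ge, fpair_nonneg; auto).
  now apply fpair_exponent_mono.
Qed.

Lemma fpb_exponent_mono (p : nat) (a b theta : R) : Nat.Odd p -> (3 <= p)%nat ->
  1 <= Rabs theta <= PI -> a <= b <= 2 -> fpb p a theta <= fpb p b theta.
Proof.
  intros Hp Hp3 Hth Hab. change (Series (fpair p a theta) <= Series (fpair p b theta)).
  apply Series_le; [|apply ex_series_fpair; auto; lra].
  intro n. split; [apply fpair_nonneg | apply fpair_exponent_mono]; auto; lra.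
Qed.

Theorem proposition5p4 (alpha : R) (p : nat) (theta : R) :
  1 < alpha < 2 -> (3 <= p)%nat -> Nat.Odd p ->
  1 <= Rabs theta <= PI ->
  fpb p 0 theta <= fpb p alpha theta <= fpb p 2 theta.
Proof.
  intros Halpha Hp3 Hodd Hth.
  split; apply fpb_exponent_mono; auto; lra.
Qed.
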